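(* Let $\bm X=[\bm x_1,\dots,\bm x_p]\in\mathbb{R}^{n\times p}$ have full column rank and unit-norm columns. Fix $j\in[p]$, let $\bm X_{\backslash j}$ be $\bm X$ with column $j$ removed, let $\bm X_{\backslash j}=\bm U_{\backslash j}\bm D_{\backslash j}\bm V_{\backslash j}^\top$ be a (thin) singular value decomposition with $\bm U_{\backslash j}\in\mathbb{R}^{n\times(p-1)}$ having orthonormal columns, and let $\sigma_j^2=\|\bm x_j-\bm U_{\backslash j}\bm U_{\backslash j}^\top\bm x_j\|^2$ (so $\sigma_j>0$). For $s_j\in\mathbb{R}$, a vector $\widetilde{\bm x}_j\in\mathbb{R}^n$ satisfies (i) $\bm X_{\backslash j}^\top\widetilde{\bm x}_j=\bm X_{\backslash j}^\top\bm x_j$, (ii) $\bm x_j^\top\widetilde{\bm x}_j=1-s_j$, (iii) $\widetilde{\bm x}_j^\top\widetilde{\bm x}_j=1$ if and only if $s_j\in[0,2\sigma_j^2]$ and $$\widetilde{\bm x}_j=\frac{s_j}{\sigma_j^2}\bm U_{\backslash j}\bm U_{\backslash j}^\top\bm x_j+\Big(1-\frac{s_j}{\sigma_j^2}\Big)\bm x_j+\bm r_j$$ for some vector $\bm r_j\in\mathbb{R}^n$ with $\bm X^\top\bm r_j=\bm 0$ and $\|\bm r_j\|=(2s_j-s_j^2/\sigma_j^2)^{1/2}$. *)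

From HB Require Import structures.
From mathcomp Require Import all_boot all_order all_algebra.
Set Implicit Arguments. Unset Strict Implicit. Unset Printing Implicit Defensive.
Import Order.TTheory GRing.Theory Num.Theory.
Local Open Scope ring_scope.

Definition dotv (R : nzRingType) (n : nat) (u v : 'cV[R]_n) : R := (u^T *m v) 0 0.
Definition sqnorm (R : nzRingType) (n : nat) (v : 'cV[R]_n) : R := dotv v v.
Definition norm2 (R : rcfType) (n : nat) (v : 'cV[R]_n) : R := Num.sqrt (sqnorm v).

From HB Require Import structures.
From mathcomp Require Import all_boot all_order all_algebra.
From mathcomp Require Import ring lra.
Set Implicit Arguments. Unset Strict Implicit. Unset Printing Implicit Defensive.
Import Order.TTheory GRing.Theory Num.Theory.
Local Open Scope ring_scope.

(* Split x_j = a + b with a = U U^T x_j, the projection onto the column space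
   of X_{\j} (which U spans, since X has full column rank), and b orthogonal
   to it; sigma^2 = |b|^2 > 0 because x_j is not in that space. Condition (i)
   says exactly that xt = a + w with w orthogonal to range U, and then (ii)
   and (iii) read <b, w> = sigma^2 - s and |w|^2 = sigma^2. Writing
   w = (1 - s / sigma^2) b + r, they become r orthogonal to b and
   |r|^2 = 2 s - s^2 / sigma^2, a quantity that is nonnegative exactly when
   0 <= s <= 2 sigma^2. *)

Section DotProduct.
Variables (R : comNzRingType) (n : nat).
Implicit Types u v w : 'cV[R]_n.

Lemma dotvE u v : dotv u v = \sum_i u i 0 * v i 0.
Proof. by rewrite /dotv mxE; apply: eq_bigr => i _; rewrite mxE. Qed.

Lemma dotvC u v : dotv u v = dotv v u.
Proof. by rewrite /dotv [in RHS](_ : v^T *m u = (u^T *m v)^T) ?mxE // trmx_mul trmxK. Qed.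

Lemma dotvDr u v w : dotv u (v + w) = dotv u v + dotv u w.
Proof. by rewrite /dotv mulmxDr mxE. Qed.

Lemma dotvNr u v : dotv u (- v) = - dotv u v.
Proof. by rewrite /dotv mulmxN mxE. Qed.

Lemma dotvBr u v w : dotv u (v - w) = dotv u v - dotv u w.
Proof. by rewrite dotvDr dotvNr. Qed.

Lemma dotvZr u v k : dotv u (k *: v) = k * dotv u v.
Proof. by rewrite /dotv -scalemxAr mxE. Qed.

Lemma dotvDl u v w : dotv (v + w) u = dotv v u + dotv w u.
Proof. by rewrite dotvC dotvDr !(dotvC u). Qed.

Lemma dotvZl u v k : dotv (k *: v) u = k * dotv v u.
Proof. by rewrite dotvC dotvZr dotvC. Qed.

Lemma dotv0r u : dotv u 0 = 0.
Proof. by rewrite /dotv mulmx0 mxE. Qed.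

Lemma dotv_mulmxl p (A : 'M[R]_(n, p)) (y : 'cV[R]_p) u :
  dotv (A *m y) u = dotv y (A^T *m u).
Proof. by rewrite /dotv trmx_mul -mulmxA. Qed.

Lemma sqnormD u v : dotv u v = 0 -> sqnorm (u + v) = sqnorm u + sqnorm v.
Proof. by move=> uv0; rewrite /sqnorm !(dotvDl, dotvDr) (dotvC v) uv0 addr0 add0r. Qed.

End DotProduct.

Section Positivity.
Variables (R : realDomainType) (n : nat).
Implicit Types v : 'cV[R]_n.

Lemma sqnorm_ge0 v : 0 <= sqnorm v.
Proof. by rewrite /sqnorm dotvE sumr_ge0 // => i _; rewrite -expr2 sqr_ge0. Qed.

Lemma sqnorm_gt0 v : (0 < sqnorm v) = (v != 0).
Proof.
rewrite lt_def sqnorm_ge0 andbT; congr negb; apply/eqP/eqP => [|->]; last first.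
  by rewrite /sqnorm dotv0r.
rewrite /sqnorm dotvE => /psumr_eq0P v0; apply/matrixP => i k.
have sq_ge0 l : true -> 0 <= v l 0 * v l 0 by rewrite -expr2 sqr_ge0.
by rewrite (ord1 k) mxE; apply/eqP; rewrite -sqrf_eq0 expr2 v0.
Qed.

End Positivity.

Lemma norm2_eq_sqrt (R : rcfType) n (v : 'cV[R]_n) q :
  0 <= q -> norm2 v = Num.sqrt q <-> sqnorm v = q.
Proof.
rewrite /norm2 => q0; split=> [/eqP|->//].
by rewrite eqr_sqrt ?sqnorm_ge0 // => /eqP.
Qed.

Lemma sphere_slice (R : fieldType) n (b r : 'cV[R]_n) s :
  sqnorm b != 0 ->
  let c := 1 - s / sqnorm b in
  (dotv b (c *: b + r) = sqnorm b - s /\ sqnorm (c *: b + r) = sqnorm b) <->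
  (dotv b r = 0 /\ sqnorm r = 2 * s - s ^+ 2 / sqnorm b).
Proof.
move=> b0 c.
have bcr : dotv b (c *: b + r) = sqnorm b - s + dotv b r.
  by rewrite dotvDr dotvZr -/(sqnorm b) /c; field.
have cbr : dotv b r = 0 -> sqnorm (c *: b + r) = c ^+ 2 * sqnorm b + sqnorm r.
  move=> br; rewrite sqnormD; last by rewrite dotvZl br mulr0.
  by rewrite /sqnorm dotvZl dotvZr mulrA -expr2.
rewrite bcr; split=> -[br rr].
  have br0 : dotv b r = 0 by apply: (addrI (sqnorm b - s)); rewrite br addr0.
  by split=> //; apply: (addrI (c ^+ 2 * sqnorm b)); rewrite -cbr // rr /c; field.
by rewrite br addr0 cbr // rr /c; split=> //; field.
Qed.

Lemma sphere_slice_radius_ge0 (R : realFieldType) (sigma2 s : R) : 0 < sigma2 ->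
  (0 <= 2 * s - s ^+ 2 / sigma2) = (0 <= s <= 2 * sigma2).
Proof.
move=> sigma2_gt0.
rewrite (_ : 2 * s - s ^+ 2 / sigma2 = s * (2 * sigma2 - s) / sigma2); last first.
  by field; rewrite gt_eqF.
rewrite pmulr_lge0 ?invr_gt0 //; apply/idP/andP => [h|[h1 h2]]; last by nra.
by split; nra.
Qed.

Lemma dotv_range_perp (R : comNzRingType) n m (U : 'M[R]_(n, m)) y w :
  U^T *m w = 0 -> dotv (U *m y) w = 0.
Proof. by move=> Uw; rewrite dotv_mulmxl Uw dotv0r. Qed.

Section UnitVectorsWithGivenProjection.
Variables (R : rcfType) (n m : nat) (U : 'M[R]_(n, m)).
Variables (x a b : 'cV[R]_n) (y : 'cV[R]_m).
Hypotheses (xE : x = a + b) (aE : a = U *m y) (Ub : U^T *m b = 0).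
Hypothesis x_unit : sqnorm x = 1.

Lemma dotv_range w : U^T *m w = 0 -> dotv a w = 0.
Proof. by rewrite aE; apply: dotv_range_perp. Qed.

Lemma sqnorm_range : sqnorm a = 1 - sqnorm b.
Proof. by rewrite -x_unit xE sqnormD ?dotv_range // addrK. Qed.

Lemma sqnorm_range_add w : U^T *m w = 0 -> sqnorm (a + w) = 1 - sqnorm b + sqnorm w.
Proof. by move=> Uw; rewrite sqnormD ?dotv_range // sqnorm_range. Qed.

Lemma dotv_perp_part w : U^T *m w = 0 -> dotv x w = dotv b w.
Proof. by move=> Uw; rewrite xE dotvDl dotv_range // add0r. Qed.

Lemma dotv_range_add w : U^T *m w = 0 -> dotv x (a + w) = 1 - sqnorm b + dotv b w.
Proof.
move=> Uw; rewrite dotvDr (dotv_perp_part Uw) xE dotvDl (dotvC b) (dotv_range Ub).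
by rewrite addr0 -/(sqnorm a) sqnorm_range.
Qed.

Hypothesis b_gt0 : 0 < sqnorm b.

Lemma unit_vector_decomposition s xt :
  (U^T *m xt = U^T *m x /\ dotv x xt = 1 - s /\ sqnorm xt = 1) <->
  (0 <= s <= 2 * sqnorm b /\
   exists r, U^T *m r = 0 /\ dotv x r = 0 /\
     norm2 r = Num.sqrt (2 * s - s ^+ 2 / sqnorm b) /\
     xt = (s / sqnorm b) *: a + (1 - s / sqnorm b) *: x + r).
Proof.
have b_neq0 : sqnorm b != 0 by rewrite gt_eqF.
set c := 1 - s / sqnorm b.
have [r ->] : exists r, xt = a + (c *: b + r).
  by exists (xt - a - c *: b); apply/matrixP=> i k; rewrite !mxE; ring.
have /= := sphere_slice r s b_neq0; rewrite -/c => slice.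
have xtE r' : a + (c *: b + r) = (s / sqnorm b) *: a + c *: x + r' <-> r' = r.
  have -> : (s / sqnorm b) *: a + c *: x = a + c *: b.
    by rewrite xE /c; apply/matrixP=> i k; rewrite !mxE; ring.
  by rewrite addrA; split=> [/addrI|->].
have Ucbr : U^T *m (c *: b + r) = U^T *m r.
  by rewrite mulmxDr -scalemxAr Ub scaler0 add0r.
have UxtE : U^T *m (a + (c *: b + r)) = U^T *m x <-> U^T *m r = 0.
  rewrite xE mulmxDr Ucbr mulmxDr Ub addr0.
  by rewrite -[X in _ = X <-> _]addr0; split=> [/addrI|->].
rewrite UxtE; split.
- case=> Ur; rewrite dotv_range_add ?sqnorm_range_add ?Ucbr // => -[xxt xtxt].
  have [br rr] : dotv b r = 0 /\ sqnorm r = 2 * s - s ^+ 2 / sqnorm b.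
    by apply/slice; split; apply: (addrI (1 - sqnorm b)); rewrite ?xxt ?xtxt; ring.
  have q_ge0 : 0 <= 2 * s - s ^+ 2 / sqnorm b by rewrite -rr sqnorm_ge0.
  split; first by rewrite -sphere_slice_radius_ge0.
  exists r; rewrite dotv_perp_part // norm2_eq_sqrt //.
  by do 3!split=> //; apply/xtE.
- case=> s_range [r' [Ur' [xr' [nr' /xtE r'E]]]]; subst r'.
  have q_ge0 : 0 <= 2 * s - s ^+ 2 / sqnorm b by rewrite sphere_slice_radius_ge0.
  rewrite dotv_perp_part // in xr'; move/(norm2_eq_sqrt _ q_ge0): nr' => rr.
  have [bcr cbr] := proj2 slice (conj xr' rr).
  by rewrite dotv_range_add ?sqnorm_range_add ?Ucbr // bcr cbr; split=> //; split; ring.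
Qed.
End UnitVectorsWithGivenProjection.

Lemma cV_eq0_row' (R : nmodType) m (v : 'cV[R]_m.+1) j :
  v = 0 <-> v j 0 = 0 /\ row' j v = 0.
Proof.
split=> [->|[vj0 v'0]]; first by split; [rewrite mxE | apply/matrixP=> i k; rewrite !mxE].
apply/matrixP=> i k; rewrite (ord1 k) mxE; case: (unliftP j i) => [l|] -> //.
by have := congr1 (fun w : 'cV[R]_m => w l 0) v'0; rewrite !mxE.
Qed.

Lemma trmx_mul_eq0_col' (R : comNzRingType) n m (X : 'M[R]_(n, m.+1)) j r :
  X^T *m r = 0 <-> dotv (col j X) r = 0 /\ (col' j X)^T *m r = 0.
Proof.
have -> : dotv (col j X) r = (X^T *m r) j 0 by rewrite /dotv tr_col -row_mul mxE.
have -> : (col' j X)^T *m r = row' j (X^T *m r).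
  by apply/matrixP=> i k; rewrite !mxE; apply: eq_bigr => l _; rewrite !mxE.
exact: cV_eq0_row'.
Qed.

Section ColumnDeletion.
Variables (F : fieldType) (n m : nat) (X : 'M[F]_(n, m.+1)) (j : 'I_m.+1).

Lemma trmx_sub_col'_adds : (X^T <= (col' j X)^T + (col j X)^T)%MS.
Proof.
apply/row_subP => i; case: (unliftP j i) => [k|] ->.
  by apply: submx_trans (addsmxSl _ _); rewrite tr_col' -row_rowsub row_sub.
by apply: submx_trans (addsmxSr _ _); rewrite tr_col.
Qed.

Lemma mxrank_col' : (\rank X <= (\rank (col' j X)).+1)%N.
Proof.
rewrite -mxrank_tr -(mxrank_tr (col' j X)).
apply: leq_trans (mxrankS trmx_sub_col'_adds) _.
apply: leq_trans (mxrank_adds_leqif _ _) _.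
by rewrite -[X in (_ <= X)%N]addn1 leq_add2l rank_leq_row.
Qed.

Lemma col_notin_col' : row_free X^T -> ~~ ((col j X)^T <= (col' j X)^T)%MS.
Proof.
move=> /row_freePn X_free; apply/negP=> sub; apply: X_free.
by exists j; rewrite -tr_col -tr_col'.
Qed.

Variables (U : 'M[F]_(n, m)).
Hypothesis X_free : row_free X^T.

Lemma range_sub_col' : ((col' j X)^T <= U^T)%MS -> (U^T <= (col' j X)^T)%MS.
Proof.
move=> sub; rewrite -(mxrank_leqif_sup sub).2 eqn_leq mxrankS //= !mxrank_tr.
apply: leq_trans (rank_leq_col U) _; rewrite -ltnS.
by move: X_free (mxrank_col'); rewrite /row_free mxrank_tr => /eqP ->.
Qed.

Lemma col_notin_range (y : 'cV[F]_m) :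
  (U^T <= (col' j X)^T)%MS -> col j X != U *m y.
Proof.
move=> sub; apply: contraNneq (col_notin_col' X_free) => ->.
by rewrite trmx_mul (submx_trans (submxMl _ _) sub).
Qed.

End ColumnDeletion.

Lemma mulmx_eq_subr0 (R : pzRingType) m n p (A : 'M[R]_(m, n)) (v w : 'M[R]_(n, p)) :
  A *m v = A *m w <-> A *m (v - w) = 0.
Proof. by rewrite mulmxBr; split=> [->|/eqP]; [rewrite subrr | rewrite subr_eq0 => /eqP]. Qed.

Lemma sub_mulmx_eq0 (F : fieldType) m1 m2 n p (A : 'M[F]_(m1, n)) (B : 'M[F]_(m2, n))
    (v : 'M[F]_(n, p)) :
  (A <= B)%MS -> B *m v = 0 -> A *m v = 0.
Proof. by move=> /submxP[D ->] Bv0; rewrite -mulmxA Bv0 mulmx0. Qed.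

(* p = m.+1 columns; X_{\j} = col' j X (n x m); x_j = col j X.
   Thin SVD X_{\j} = U D V^T with U^T U = I, D = diag(d) with d >= 0,
   V^T V = I. *)
Theorem proposition2p2 (R : rcfType) (n m : nat) (X : 'M[R]_(n, m.+1))
  (j : 'I_m.+1) (U : 'M[R]_(n, m)) (d : 'rV[R]_m) (V : 'M[R]_m)
  (hrank : \rank X = m.+1)
  (hunit : forall i : 'I_m.+1, sqnorm (col i X) = 1)
  (hU : U^T *m U = 1%:M)
  (hd : forall i : 'I_m, 0 <= d 0 i)
  (hV : V^T *m V = 1%:M)
  (hsvd : col' j X = U *m diag_mx d *m V^T)
  (s : R) (xt : 'cV[R]_n) :
  let xj := col j X in
  let sigma2 := sqnorm (xj - U *m U^T *m xj) in
  ((col' j X)^T *m xt = (col' j X)^T *m xj /\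
   dotv xj xt = 1 - s /\
   dotv xt xt = 1)
  <->
  (0 <= s <= 2 * sigma2 /\
   exists r : 'cV[R]_n,
     X^T *m r = 0 /\
     norm2 r = Num.sqrt (2 * s - s ^+ 2 / sigma2) /\
     xt = (s / sigma2) *: (U *m U^T *m xj) + (1 - s / sigma2) *: xj + r).
Proof.
(* Only the factorization of col' j X through U matters: hd and hV are unused. *)
move=> xj sigma2.
have X_free : row_free X^T by rewrite /row_free mxrank_tr hrank.
have subX'U : ((col' j X)^T <= U^T)%MS by rewrite hsvd !trmx_mul mulmxA submxMl.
have subUX' := range_sub_col' X_free subX'U.
have kerX'U v : (col' j X)^T *m v = 0 <-> U^T *m v = 0.
  by split; apply: sub_mulmx_eq0.
have lhsE : (col' j X)^T *m xt = (col' j X)^T *m xj <-> U^T *m xt = U^T *m xj.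
  by rewrite !mulmx_eq_subr0 kerX'U.
have rhsE r : X^T *m r = 0 <-> U^T *m r = 0 /\ dotv xj r = 0.
  by rewrite (trmx_mul_eq0_col' X j) kerX'U and_comm.
have xj_split : xj = U *m U^T *m xj + (xj - U *m U^T *m xj) by rewrite addrC subrK.
have proj_range : U *m U^T *m xj = U *m (U^T *m xj) by rewrite mulmxA.
have U_perp : U^T *m (xj - U *m U^T *m xj) = 0 by rewrite mulmxBr !mulmxA hU mul1mx subrr.
have sigma2_gt0 : 0 < sigma2 by rewrite sqnorm_gt0 subr_eq0 -mulmxA col_notin_range.
rewrite lhsE (unit_vector_decomposition xj_split proj_range U_perp (hunit j) sigma2_gt0).
split=> -[s_range [r [Xr rest]]]; split=> //; exists r.
  by case: rest => xr rest; rewrite rhsE.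
by case/rhsE: Xr.
Qed.
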